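(* Let $H$ be a finite abelian group and $k$ a positive integer. Suppose that for infinitely many primes $p$, every non-zero sum subset of size $k$ of $(\mathbb{Z}_p \times H) \setminus \{0_{\mathbb{Z}_p\times H}\}$ is sequenceable. Then for every positive integer $m$ all of whose prime factors are greater than $k!/2$, every non-zero sum subset of size $k$ of $(\mathbb{Z}_m \times H) \setminus \{0_{\mathbb{Z}_m\times H}\}$ is sequenceable.
   Context: For a finite subset $S$ of an abelian group with $|S| = k$, an ordering $(x_1,\dots,x_k)$ of $S$ has partial sums $(y_0,\dots,y_k)$ with $y_0 = 0$, $y_i = x_1+\cdots+x_i$. It is a sequencing if the $y_i$ are pairwise distinct, and a rotational sequencing if they are pairwise distinct except that $y_k = y_0 = 0$; $S$ is sequenceable if it has one or the other. $S$ is non-zero sum if the sum of its elements is nonzero. *)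

From mathcomp Require Import all_boot all_order all_algebra.
Set Implicit Arguments. Unset Strict Implicit. Unset Printing Implicit Defensive.
Import GRing.Theory.
Local Open Scope ring_scope.

(* A finite subset S of an abelian group G, given as a duplicate-free list.
   An ordering of S is a list s with perm_eq s S. *)

Definition psum (G : zmodType) (s : seq G) (i : nat) : G :=
  \sum_(x <- take i s) x.

Definition is_sequencing (G : zmodType) (s : seq G) : Prop :=
  uniq [seq psum s i | i <- iota 0 (size s).+1].

Definition is_rotational_sequencing (G : zmodType) (s : seq G) : Prop :=
  uniq [seq psum s i | i <- iota 0 (size s)] /\ psum s (size s) = 0.

Definition sequenceable (G : zmodType) (S : seq G) : Prop :=
  exists s : seq G, perm_eq s S /\
    (is_sequencing s \/ is_rotational_sequencing s).

Definition nonzero_sum (G : zmodType) (S : seq G) : Prop :=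
  \sum_(x <- S) x != 0.

Definition all_nzs_sequenceable (G : zmodType) (k : nat) : Prop :=
  forall S : seq G, uniq S -> size S = k -> 0 \notin S ->
    nonzero_sum S -> sequenceable S.

(* Z_n for n >= 1, represented as 'I_(n.-1.+1) with its canonical
   additive group structure (integers mod n). *)
Notation "''Zmod_' n" := ('I_(n.-1.+1)) (at level 8, n at level 2).

From mathcomp Require Import all_boot all_order all_algebra.
From mathcomp Require Import zify ring.
Set Implicit Arguments. Unset Strict Implicit. Unset Printing Implicit Defensive.
Import Order.TTheory GRing.Theory Num.Theory.
Local Open Scope ring_scope.

(* Write the elements of S as x_i = (a_i, h_i).  The index sets I with
   m | sum_(i in I) a_i cut out a linear system solved by the rational vector
   a/m; Cramer's rule on a nonsingular 0/1 minor V of this system yields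
   integers b_i = D a_i (mod m), D = det V, with sum_(i in I) b_i = 0 for all
   these I.  As |D| <= k!/2 lies below every prime factor of m, D is a unit
   mod m, so conversely sum_(i in I) b_i = 0 forces m | sum_(i in I) a_i, and
   b_i = b_j forces a_i = a_j.  For a prime p > sum_i |b_i| the map
   x_i |-> (b_i mod p, h_i) into Z_p x H is then injective on S and preserves
   exactly which subsets of S sum to zero.  Equal partial sums of an ordering
   are vanishing sums of segments, so a sequencing of the image of S pulls
   back to a sequencing of S. *)

Lemma Zp1_mulrn n (x : 'I_n.+1) : Zp1 *+ x = x.
Proof. by apply: val_inj; rewrite Zp_mulrn /= modnMml mul1n modn_small. Qed.

Lemma Zp1_mulrn_eq0 n j : ((Zp1 : 'I_n.+1) *+ j == 0) = (n.+1 %| j)%N.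
Proof. by rewrite Zp_mulrn -val_eqE /= modnMml mul1n. Qed.

Lemma Zp1_mulrz_eq0 n (z : int) : ((Zp1 : 'I_n.+1) *~ z == 0) = (n.+1 %| z)%Z.
Proof. by case: z => j; rewrite ?NegzE ?mulrNz ?oppr_eq0 dvdzE ?abszN /= Zp1_mulrn_eq0. Qed.

Lemma Zp_sum_eq0 n (I : Type) (r : seq I) (F : I -> 'I_n.+1) :
  (\sum_(i <- r) F i == 0) = (n.+1 %| \sum_(i <- r) (F i : nat)%:Z)%Z.
Proof.
rewrite -Zp1_mulrz_eq0 mulrz_sumr; congr (_ == 0).
by apply: eq_bigr => i _; rewrite -pmulrn Zp1_mulrn.
Qed.

Lemma Zp_eq_dvdz n (x y : 'I_n.+1) : (x == y) = (n.+1 %| (x : nat)%:Z - (y : nat)%:Z)%Z.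
Proof. by rewrite -subr_eq0 -Zp1_mulrz_eq0 mulrzBr -!pmulrn !Zp1_mulrn. Qed.

Lemma dvdz_small (p : nat) (z : int) : `|z| < p%:Z -> (p %| z)%Z = (z == 0).
Proof.
move=> lt; rewrite dvdzE -absz_eq0; have : (`|z|%N < p)%N by rewrite -ltz_nat abszE.
by case: (absz z) => [|n] lt_n_p; rewrite ?dvdn0 // gtnNdvd.
Qed.

Lemma coprime_lt_prime_divisors (d m : nat) : (0 < d)%N ->
  (forall q, prime q -> q %| m -> d < q)%N -> coprime d m.
Proof.
move=> d0 hq; apply/negPn/negP => ndm.
have g1 : (1 < gcdn d m)%N by rewrite ltn_neqAle eq_sym ndm gcdn_gt0 d0.
have q_dvd_d := dvdn_trans (pdiv_dvd _) (dvdn_gcdl d m).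
have := hq _ (pdiv_prime g1) (dvdn_trans (pdiv_dvd _) (dvdn_gcdr d m)).
by rewrite ltnNge dvdn_leq.
Qed.

Lemma det_mx22 (R : comNzRingType) (Z : 'M[R]_2) :
  \det Z = Z 0 0 * Z 1 1 - Z 0 1 * Z 1 0.
Proof.
rewrite (expand_det_row _ 0) !big_ord_recl big_ord0 /cofactor !det_mx11 !mxE.
rewrite /= addr0 expr0 expr1 mul1r mulN1r mulrN.
by congr (Z _ _ * Z _ _ - Z _ _ * Z _ _); apply: val_inj.
Qed.

Definition zero_one_mx m n (Z : 'M[int]_(m, n)) := forall i j, (Z i j == 0) || (Z i j == 1).

Lemma normr_det_zero_one_mx r (Z : 'M[int]_r.+1) : zero_one_mx Z ->
  `|\det Z| <= \sum_j `|\det (row' 0 (col' j Z))|.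
Proof.
move=> Z01; rewrite (expand_det_row _ 0); apply: le_trans (ler_norm_sum _ _ _) _.
apply: ler_sum => j _; rewrite normrM /cofactor normrMsign.
by case/orP: (Z01 0 j) => /eqP ->; rewrite ?normr0 ?mul0r ?normr1 ?mul1r.
Qed.

Lemma det_zero_one_mx_bound r (Z : 'M[int]_r) : zero_one_mx Z ->
  2 * `|\det Z| <= (maxn 2 r`!)%:R.
Proof.
elim: r Z => [|r IH] Z Z01; first by rewrite det_mx00.
case: r IH Z Z01 => [|[|r]] IH Z Z01.
- by rewrite det_mx11; case/orP: (Z01 0 0) => /eqP ->.
- rewrite det_mx22.
  by case/orP: (Z01 0 0); case/orP: (Z01 0 1); case/orP: (Z01 1 0); case/orP: (Z01 1 1);
    do 4! move=> /eqP ->.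
have minor_bound j : 2 * `|\det (row' 0 (col' j Z))| <= (r.+2)`!%:R.
  have /maxn_idPr <- : (2 <= (r.+2)`!)%N by apply: leq_trans (fact_geq _).
  by apply: IH => i l; rewrite !mxE.
apply: le_trans (_ : 2 * \sum_(j < r.+3) `|\det (row' 0 (col' j Z))| <= _).
  by rewrite ler_pM2l // normr_det_zero_one_mx.
rewrite mulr_sumr; apply: le_trans (ler_sum _ (fun j _ => minor_bound j)) _.
rewrite sumr_const card_ord -mulrnA ler_nat mulnC -factS.
by apply: leq_maxr.
Qed.

Lemma integral_multiple_of_solution N k
    (A : 'M[int]_(N, k)) (c0 : 'cV[rat]_k) (t : 'cV[int]_N) :
  map_mx intr A *m c0 = map_mx intr t ->
  exists r (f : 'I_r -> 'I_N) (g : 'I_r -> 'I_k) (c : 'cV[int]_k),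
    [/\ (r <= k)%N, \det (mxsub f g A) != 0 &
        map_mx intr (A *m c) = (\det (mxsub f g A))%:~R *: (map_mx intr A *m c0)].
Proof.
move=> Ac0.
set Aq := map_mx intr A; set f := maxrankfun Aq; set R := rowsub f Aq.
have fullRT : row_full R^T by rewrite /row_full mxrank_tr; exact: maxrowsub_free.
set g := fullrankfun fullRT.
pose V := mxsub f g A.
pose P : 'M[int]_(k, \rank Aq) := \matrix_(j, l) (j == g l)%:R.
pose c := P *m (\adj V *m rowsub f t).
have V_unit : map_mx intr V \in @unitmx rat _.
  have -> : map_mx intr V = (rowsub g R^T)^T by apply/matrixP => i j; rewrite !mxE.
  by rewrite unitmx_tr fullrowsub_unit.
have detV : (\det V)%:~R = \det (map_mx intr V) :> rat by rewrite det_map_mx.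
have RP : R *m map_mx intr P = map_mx intr V.
  apply/matrixP => i l; rewrite !mxE (bigD1 (g l)) //= big1 ?addr0.
    by rewrite !mxE eqxx mulr1.
  by move=> j /negPf nj; rewrite !mxE nj mulr0.
have Rc : R *m map_mx intr c = (\det V)%:~R *: (R *m c0).
  rewrite /c !map_mxM mulmxA RP mulmxA map_mx_adj mul_mx_adj detV.
  rewrite mul_scalar_mx mul_rowsub_mx Ac0; congr (_ *: _).
  by apply/matrixP => i j; rewrite !mxE.
exists (\rank Aq), f, g, c; split; first exact: rank_leq_col.
  by move: V_unit; rewrite unitmxE unitfE -detV intr_eq0.
have /submxP [X AqX] : (Aq <= R)%MS by rewrite eq_maxrowsub.
have AqE v : Aq *m v = X *m (R *m v) by rewrite mulmxA -AqX.
by rewrite map_mxM -/Aq !AqE Rc -scalemxAr.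
Qed.

Lemma zero_sum_rescaling k m (a : 'I_k -> int) : (0 < m)%N ->
  exists (D : int) (b : 'I_k -> int),
    [/\ D != 0, 2 * `|D| <= (maxn 2 k`!)%:R,
        forall i, (m %| b i - D * a i)%Z &
        forall I : {set 'I_k}, (m %| \sum_(i in I) a i)%Z -> \sum_(i in I) b i = 0].
Proof.
move=> m_gt0.
pose zs (I : {set 'I_k}) := (m %| \sum_(i in I) a i)%Z.
pose A : 'M[int]_(#|{: {set 'I_k}}|, k) :=
  \matrix_(n, j) (zs (enum_val n) && (j \in enum_val n))%:R.
have A_row (R : pzRingType) (v : 'cV[R]_k) I : zs I ->
    (map_mx intr A *m v) (enum_rank I) 0 = \sum_(i in I) v i 0.
  move=> zsI; rewrite mxE [RHS]big_mkcond; apply: eq_bigr => j _.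
  by rewrite !mxE enum_rankK zsI; case: (j \in I); rewrite ?mul1r ?mul0r.
pose c0 : 'cV[rat]_k := \col_j ((a j)%:~R / m%:R).
pose t : 'cV[int]_(#|{: {set 'I_k}}|) :=
  \col_n (if zs (enum_val n) then ((\sum_(i in enum_val n) a i) %/ m)%Z else 0).
have m_neq0 : (m%:R : rat) != 0 by rewrite pnatr_eq0 -lt0n.
have Ac0 : map_mx intr A *m c0 = map_mx intr t.
  apply/matrixP => n z; rewrite ord1 -(enum_valK n); move: (enum_val n) => I.
  rewrite [RHS]mxE [t _ _]mxE enum_rankK; case: ifP => zsI; last first.
    by rewrite mxE big1 // => i _; rewrite !mxE enum_rankK zsI mul0r.
  rewrite (A_row rat) //; under eq_bigr do rewrite mxE.
  rewrite -mulr_suml -rmorph_sum; apply: (mulIf m_neq0); rewrite mulfVK //.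
  by rewrite -[in LHS](divzK zsI) rmorphM.
have [r [f [g [c [r_le_k detV_neq0 Ac]]]]] := integral_multiple_of_solution Ac0.
set D := \det (mxsub f g A) in detV_neq0 Ac.
exists D, (fun i => D * a i - m%:Z * c i 0); split => //.
- apply: le_trans (det_zero_one_mx_bound _) _.
    by move=> i j; rewrite !mxE; case: (_ && _).
  by rewrite ler_nat geq_max leq_maxl leq_max leq_fact ?orbT.
- by move=> i; rewrite addrAC subrr add0r rpredN dvdz_mulr.
move=> I zsI; move/matrixP: Ac => /(_ (enum_rank I) 0).
rewrite map_mxM [RHS]mxE !A_row //.
under eq_bigr do rewrite mxE; under [in RHS]eq_bigr do rewrite mxE.
rewrite -mulr_suml => cI; apply: (@intr_inj rat); rewrite rmorph_sum /= rmorph0.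
under eq_bigr do rewrite intrB !intrM.
rewrite sumrB -!mulr_sumr cI -rmorph_sum /=.
by field.
Qed.

Definition zero_sum_equiv (T : eqType) (G G' : zmodType) (S : seq T)
    (u : T -> G) (v : T -> G') :=
  forall R : seq T, uniq R -> {subset R <= S} ->
    (\sum_(x <- R) u x == 0) = (\sum_(x <- R) v x == 0).

Lemma big_subset_filter (T : eqType) (M : zmodType) (S R : seq T) (F : T -> M) :
  uniq S -> uniq R -> {subset R <= S} ->
  \sum_(x <- R) F x = \sum_(x <- S | x \in R) F x.
Proof.
move=> uS uR sRS; rewrite -[RHS]big_filter; apply: perm_big.
apply: uniq_perm => //; first exact: filter_uniq.
by move=> x; rewrite mem_filter; case: (boolP (x \in R)) => // /sRS ->.
Qed.

Lemma ler_sum_subset (T : eqType) (M : numDomainType) (S R : seq T) (F : T -> M) :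
  uniq S -> uniq R -> {subset R <= S} -> (forall x, 0 <= F x) ->
  \sum_(x <- R) F x <= \sum_(x <- S) F x.
Proof.
move=> uS uR sRS F_ge0; rewrite (big_subset_filter _ uS uR sRS).
by rewrite [leRHS](bigID (mem R)) /= lerDl sumr_ge0.
Qed.

Lemma zero_sum_lift (T : eqType) m (S : seq T) (u : T -> 'Zmod_m) :
  (0 < m)%N -> uniq S -> (forall q, prime q -> q %| m -> (size S)`! < 2 * q)%N ->
  exists b : T -> int,
    zero_sum_equiv S u b /\ {in S &, forall x y, b x = b y -> u x = u y}.
Proof.
case: m u => // n u _; case: S => [_ _ | x0 S'].
  exists (fun=> 0); split=> // -[|x R] _ sR; first by rewrite !big_nil.
  by have := sR x (mem_head x R).
set S := x0 :: S' => uS hq.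
pose a (i : 'I_(size S)) : int := (u (nth x0 S i) : nat)%:Z.
have [D [b [D_neq0 D_le bD b_zs]]] := zero_sum_rescaling a (ltn0Sn n).
have D_coprime : coprimez n.+1 D.
  rewrite coprimezE coprime_sym; apply: coprime_lt_prime_divisors => [|q q_prime q_dvd].
    by rewrite absz_gt0.
  have := prime_gt1 q_prime; have := hq q q_prime q_dvd.
  by move: D_le; rewrite -abszE natz; lia.
pose bS x := oapp b 0 (insub (index x S)).
have bS_nth (i : 'I_(size S)) : bS (nth x0 S i) = b i by rewrite /bS index_uniq // valK.
have sumE (F : T -> int) R : uniq R -> {subset R <= S} ->
    \sum_(x <- R) F x = \sum_(i in [set i : 'I_(size S) | nth x0 S i \in R]) F (nth x0 S i).
  move=> uR sRS; rewrite (big_subset_filter _ uS uR sRS) (big_nth x0) big_mkord.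
  by apply: eq_bigl => i; rewrite inE.
exists bS; split => [R uR sRS | x y xS yS bxy].
  rewrite Zp_sum_eq0 !sumE //; under [in RHS]eq_bigr do rewrite bS_nth.
  apply/idP/eqP => [/b_zs // | b_sum0].
  have : (n.+1 %| \sum_(i in [set i : 'I_(size S) | nth x0 S i \in R]) (b i - D * a i))%Z.
    by apply: rpred_sum => i _; exact: bD.
  by rewrite sumrB b_sum0 sub0r rpredN -mulr_sumr Gauss_dvdzr.
have nthP z : z \in S -> exists i : 'I_(size S), z = nth x0 S i.
  move=> zS; have zS' : (index z S < size S)%N by rewrite index_mem.
  by exists (Ordinal zS'); rewrite nth_index.
move: bxy; have [[i ->] [j ->]] := (nthP x xS, nthP y yS); rewrite !bS_nth => bij.
apply/eqP; rewrite Zp_eq_dvdz -(Gauss_dvdzr _ D_coprime).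
have -> : D * (a i - a j) = (b j - D * a j) - (b i - D * a i) by rewrite bij; ring.
exact: rpredB.
Qed.

Lemma zero_sum_equiv_Zp (T : eqType) n (S : seq T) (b : T -> int) :
  uniq S -> \sum_(x <- S) `|b x| < n.+1%:Z ->
  zero_sum_equiv S b (fun x => (Zp1 : 'I_n.+1) *~ b x) /\
  {in S &, forall x y, (Zp1 : 'I_n.+1) *~ b x = Zp1 *~ b y -> b x = b y}.
Proof.
move=> uS b_small.
have subset_small R : uniq R -> {subset R <= S} -> \sum_(x <- R) `|b x| < n.+1%:Z.
  by move=> uR sRS; apply: le_lt_trans b_small; apply: ler_sum_subset.
split=> [R uR sRS | x y xS yS].
  rewrite -mulrz_sumr Zp1_mulrz_eq0 dvdz_small //.
  exact: le_lt_trans (ler_norm_sum _ _ _) (subset_small R uR sRS).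
move/eqP; rewrite -subr_eq0 -mulrzBr Zp1_mulrz_eq0 dvdz_small ?subr_eq0 => [/eqP //|].
have [-> | x_neq_y] := eqVneq x y; first by rewrite subrr normr0.
apply: le_lt_trans (ler_normB _ _) _.
have := subset_small [:: x; y]; rewrite !big_cons big_nil addr0; apply.
  by rewrite /= inE x_neq_y.
by move=> z; rewrite !inE => /orP[] /eqP ->.
Qed.

Lemma sum_pair_eq0 (G1 G2 : zmodType) (I : Type) (r : seq I) (F : I -> G1 * G2) :
  (\sum_(i <- r) F i == 0) = (\sum_(i <- r) (F i).1 == 0) && (\sum_(i <- r) (F i).2 == 0).
Proof.
have -> : \sum_(i <- r) F i = (\sum_(i <- r) (F i).1, \sum_(i <- r) (F i).2).
  by elim/big_rec3: _ => // i x y z _ ->.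
by [].
Qed.

Lemma psum0 (G : zmodType) (s : seq G) : psum s 0 = 0.
Proof. by rewrite /psum take0 big_nil. Qed.

Lemma psum_segment (G : zmodType) (s : seq G) i j : (i <= j)%N ->
  psum s j = psum s i + \sum_(x <- drop i (take j s)) x.
Proof.
by move=> le_ij; rewrite /psum -big_cat -{1}(cat_take_drop i (take j s)) take_takel.
Qed.

Lemma uniq_map_eq_pattern (T U V : eqType) (F : T -> U) (F' : T -> V) (l : seq T) :
  {in l &, forall i j, (F i == F j) = (F' i == F' j)} -> uniq (map F l) = uniq (map F' l).
Proof.
elim: l => [|x l IH] FF' //=.
rewrite IH => [|i j il jl]; last by apply: FF'; rewrite inE ?il ?jl orbT.
congr (~~ _ && _); apply/mapP/mapP => -[y yl e]; exists y => //; apply/eqP.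
  by rewrite -FF' ?inE ?eqxx ?yl ?orbT // e.
by rewrite FF' ?inE ?eqxx ?yl ?orbT // e.
Qed.

Lemma sequencing_of_psum_pattern (G G' : zmodType) (s : seq G) (s' : seq G') :
  size s = size s' ->
  (forall i j, (i <= size s)%N -> (j <= size s)%N ->
     (psum s i == psum s j) = (psum s' i == psum s' j)) ->
  is_sequencing s' \/ is_rotational_sequencing s' ->
  is_sequencing s \/ is_rotational_sequencing s.
Proof.
move=> size_s pattern; rewrite /is_sequencing /is_rotational_sequencing -size_s.
have uniqE n : (n <= (size s).+1)%N ->
    uniq [seq psum s i | i <- iota 0 n] = uniq [seq psum s' i | i <- iota 0 n].
  move=> le_n; apply: uniq_map_eq_pattern => i j; rewrite !mem_iota /= => lt_i lt_j.
  by apply: pattern; rewrite -ltnS (leq_trans _ le_n).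
rewrite !uniqE //; case=> [|[uniq_s' psum_s']]; [left | right] => //.
split => //; have := pattern (size s) 0 (leqnn _) (leq0n _).
by rewrite !psum0 psum_s' eqxx => /eqP.
Qed.

Lemma psum_map_pattern (G G' : zmodType) (S s : seq G) (f : G -> G') :
  zero_sum_equiv S id f -> uniq s -> {subset s <= S} ->
  forall i j, (psum (map f s) i == psum (map f s) j) = (psum s i == psum s j).
Proof.
move=> ZS uniq_s sub_s i j.
wlog le_ij : i j / (i <= j)%N.
  by move=> W; case: (leqP i j) => [|/ltnW] /W //; rewrite eq_sym [psum s j == _]eq_sym.
rewrite !(psum_segment _ le_ij) -map_take -map_drop big_map.
rewrite -{1}[psum _ i]addr0 -{1}[psum s i]addr0 !(inj_eq (addrI _)) ![0 == _]eq_sym.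
symmetry; apply: ZS; first by rewrite drop_uniq ?take_uniq.
by move=> x /mem_drop /mem_take /sub_s.
Qed.

Lemma sequenceable_of_map (G G' : zmodType) (S : seq G) (f : G -> G') :
  uniq S -> zero_sum_equiv S id f -> sequenceable (map f S) -> sequenceable S.
Proof.
move=> uS ZS [s' [/(perm_iotaP (f 0)) [Is perm_Is ->] seq_s']].
rewrite size_map in perm_Is.
pose s := [seq nth 0 S i | i <- Is].
have map_s : [seq nth (f 0) (map f S) i | i <- Is] = map f s.
  rewrite -map_comp; apply/eq_in_map => i.
  by rewrite (perm_mem perm_Is) mem_iota => /= lt_i; rewrite (nth_map 0).
have perm_s : perm_eq s S by apply/(perm_iotaP 0); exists Is.
exists s; split => //; move: seq_s'; rewrite map_s.
apply: sequencing_of_psum_pattern; first by rewrite size_map.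
move=> i j _ _; symmetry; apply: psum_map_pattern ZS _ _ i j.
  by rewrite (perm_uniq perm_s).
by move=> x; rewrite (perm_mem perm_s).
Qed.

Lemma sequenceable_of_zero_sum_equiv (G G' : zmodType) k (S : seq G) (f : G -> G') :
  all_nzs_sequenceable G' k -> uniq S -> size S = k -> 0 \notin S -> nonzero_sum S ->
  {in S &, injective f} -> zero_sum_equiv S id f -> sequenceable S.
Proof.
move=> seqG' uS size_S S_n0 S_nzs f_inj ZS.
apply: (sequenceable_of_map uS ZS); apply: seqG'.
- by rewrite map_inj_in_uniq.
- by rewrite size_map.
- apply/mapP => -[x xS fx0].
  have sub_x : {subset [:: x] <= S} by move=> y; rewrite inE => /eqP ->.
  move: (ZS [:: x] isT sub_x); rewrite !big_seq1 -fx0 eqxx => /eqP x0.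
  by rewrite -x0 xS in S_n0.
- by rewrite /nonzero_sum big_map -ZS.
Qed.

Theorem corollary4p13 (H : finZmodType) (k : nat) (hk : (0 < k)%N) :
  (forall N : nat, exists p : nat,
      (N < p)%N /\ prime p /\ all_nzs_sequenceable ('Zmod_p * H)%type k) ->
  forall m : nat, (0 < m)%N ->
    (forall q : nat, prime q -> (q %| m)%N -> (k`! < 2 * q)%N) ->
    all_nzs_sequenceable ('Zmod_m * H)%type k.
Proof.
move=> hyp m m_gt0 hq S uS size_S S_n0 S_nzs.
rewrite -size_S in hq; have [b [fst_b b_inj]] := zero_sum_lift fst m_gt0 uS hq.
have [p [B_lt_p [p_prime p_seq]]] := hyp (absz (\sum_(x <- S) `|b x|)).
have [|b_Zp Zp_inj] := zero_sum_equiv_Zp (n := p.-1) (b := b) uS.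
  rewrite (prednK (prime_gt0 p_prime)); apply: le_lt_trans (ler_norm _) _.
  by rewrite -abszE ltz_nat.
pose f (x : 'Zmod_m * H) : 'Zmod_p * H := (Zp1 *~ b x, x.2).
apply: (sequenceable_of_zero_sum_equiv p_seq uS size_S S_n0 S_nzs (f := f)).
  move=> [x1 x2] [y1 y2] xS yS [/(Zp_inj _ _ xS yS) /(b_inj _ _ xS yS) /= -> ->] //.
by move=> R uR sRS; rewrite !sum_pair_eq0 /= fst_b // b_Zp.
Qed.
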